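(* For every language $L$, $Q^{1}_L\mathrm{FO}(+,\times)\equiv Q^{\star}_L\mathrm{FO}(+,\times)$.
   Context: Strings as structures: a nonempty string $b_0\cdots b_{n-1}$ over the ordered alphabet $(a_1,\dots,a_s)$ is the structure with universe $\{0,\dots,n-1\}$, natural order $<$, and unary predicates $P_{a_i}=\{j:b_j=a_i\}$. FO uses $=$, $<$, these predicates, $\min,\max$, connectives, $\exists,\forall$; ''$+,\times$'' means the ternary relations $i+j=k$ and $i\cdot j=k$ are additionally built in. Monadic second-order Lindström quantifiers: for a language $L$ over $(a_1,\dots,a_s)$ and distinct unary second-order variables $\overline X=(X_1,\dots,X_k)$, over universe $\{0,\dots,n-1\}$ and an assignment $(A_1,\dots,A_k)$ let $s^i_j=1$ iff $j\in A_i$. For $Q^1_L$ the $2^{nk}$ assignments are ordered lexicographically by the interleaved code $s^1_0\cdots s^k_0s^1_1\cdots s^k_1\cdots s^1_{n-1}\cdots s^k_{n-1}$; for $Q^\star_L$ by the concatenated code $s^1_0\cdots s^1_{n-1}\cdots s^k_0\cdots s^k_{n-1}$. Then $\mathcal A\models Q\overline X[\varphi_1,\dots,\varphi_{s-1}]$ iff the word of length $2^{nk}$ whose $i$-th letter is $a_j$ for the least $j$ with $\varphi_j$ true at the $i$-th assignment (and $a_s$ if none) lies in $L$. $Q^1_L\mathrm{FO}(+,\times)$ consists of all formulas $Q^1_L\overline X[\varphi_1,\dots,\varphi_{s-1}]$ with $\varphi_i$ first-order formulas (built-in $<,+,\times$) possibly containing $\overline X$; $Q^\star_L\mathrm{FO}(+,\times)$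 likewise with $Q^\star_L$. $\mathcal L\equiv\mathcal L'$ means over every string signature every sentence of either logic has an equivalent sentence of the other. *)

From mathcomp Require Import all_boot.
Set Implicit Arguments. Unset Strict Implicit. Unset Printing Implicit Defensive.

Inductive term := TVar of nat | TMin | TMax.

(* formulas over the string signature with alphabet 'I_t (letters a_1..a_t
   are the ordinals 0..t-1).  FSO X x is the atom "X_X(x)" for the
   second-order (monadic) variable number X. *)
Inductive form (t : nat) : Type :=
| FEq    of term & term
| FLt    of term & term
| FLet   of 'I_t & term
| FSO    of nat & term
| FPlus  of term & term & term
| FTimes of term & term & term
| FNot   of form t
| FAnd   of form t & form t
| FOr    of form t & form t
| FEx    of nat & form t
| FAll   of nat & form t.

Definition upd (V : nat -> nat) (x d : nat) : nat -> nat :=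
  fun y => if y == x then d else V y.

Definition tval (n : nat) (V : nat -> nat) (u : term) : nat :=
  match u with TVar x => V x | TMin => 0 | TMax => n.-1 end.

(* Satisfaction in the string structure w (universe {0,..,size w - 1});
   V assigns first-order variables, S m j = (j \in X_m). *)
Fixpoint eval (t : nat) (w : seq 'I_t) (V : nat -> nat)
    (S : nat -> nat -> bool) (f : form t) : bool :=
  let n := size w in
  let tv := tval n V in
  match f with
  | FEq a b => tv a == tv b
  | FLt a b => tv a < tv b
  | FLet c a => nth None (map Some w) (tv a) == Some c
  | FSO m a => S m (tv a)
  | FPlus a b c => tv a + tv b == tv c
  | FTimes a b c => tv a * tv b == tv c
  | FNot g => ~~ eval w V S g
  | FAnd g h => eval w V S g && eval w V S h
  | FOr g h => eval w V S g || eval w V S h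
  | FEx x g => has (fun d => eval w (upd V x d) S g) (iota 0 n)
  | FAll x g => all (fun d => eval w (upd V x d) S g) (iota 0 n)
  end.

Definition term_ok (bnd : seq nat) (u : term) : bool :=
  match u with TVar x => x \in bnd | _ => true end.

Fixpoint fo_closed (t : nat) (bnd : seq nat) (f : form t) : bool :=
  match f with
  | FEq a b | FLt a b => term_ok bnd a && term_ok bnd b
  | FLet _ a | FSO _ a => term_ok bnd a
  | FPlus a b c | FTimes a b c => [&& term_ok bnd a, term_ok bnd b & term_ok bnd c]
  | FNot g => fo_closed bnd g
  | FAnd g h | FOr g h => fo_closed bnd g && fo_closed bnd h
  | FEx x g | FAll x g => fo_closed (x :: bnd) g
  end.

Fixpoint so_bound (t : nat) (k : nat) (f : form t) : bool :=
  match f with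
  | FSO m _ => m < k
  | FNot g | FEx _ g | FAll _ g => so_bound k g
  | FAnd g h | FOr g h => so_bound k g && so_bound k h
  | _ => true
  end.

(* A sentence  Q X_0..X_(k-1) [phi_1, ..., phi_s]  for a language over the
   ordered alphabet 'I_s.+1 (letters a_1..a_(s+1)); the phi_i are
   first-order formulas with no free first-order variables whose only
   second-order variables are among X_0..X_(k-1). *)
Record qsent (s t : nat) := QSent { qk : nat ; qphis : s.-tuple (form t) }.

Definition qsent_wf (s t : nat) (q : qsent s t) : bool :=
  all (fun phi => fo_closed [::] phi && so_bound (qk q) phi) (qphis q).

(* The i-th bit string of length N in lexicographic order (i < 2^N),
   i.e. the N-digit binary expansion of i, most significant digit first. *)
Definition lex_bits (N i : nat) : seq bool :=
  [seq odd (i %/ 2 ^ (N.-1 - p)) | p <- iota 0 N].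

Inductive qmode := Interleaved | Concatenated.

(* Interleaved (Q^1): s^1_0..s^k_0 s^1_1 ... ;
   concatenated (Q^star): s^1_0..s^1_(n-1) ... s^k_0..s^k_(n-1). *)
Definition decode (md : qmode) (n k : nat) (code : seq bool) : nat -> nat -> bool :=
  fun m j => [&& m < k, j < n &
     nth false code (match md with Interleaved => j * k + m
                                 | Concatenated => m * n + j end)].

Definition qword (md : qmode) (s t : nat) (w : seq 'I_t) (q : qsent s t)
    : seq 'I_s.+1 :=
  let n := size w in
  let k := qk q in
  [seq (inord (find id [seq eval w (fun _ => 0)
                           (decode md n k (lex_bits (n * k) i)) phi
                       | phi <- qphis q]) : 'I_s.+1)
  | i <- iota 0 (2 ^ (n * k))].

Definition qsat (md : qmode) (s t : nat) (L : seq 'I_s.+1 -> Prop)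
    (w : seq 'I_t) (q : qsent s t) : Prop :=
  L (qword md w q).

Definition qlogic_le (md md' : qmode) (s : nat) (L : seq 'I_s.+1 -> Prop) : Prop :=
  forall (t : nat) (q : qsent s t), qsent_wf q ->
    exists q' : qsent s t, qsent_wf q' /\
      forall w : seq 'I_t, 0 < size w -> (qsat md L w q <-> qsat md' L w q').

Definition qlogic_equiv (md md' : qmode) (s : nat) (L : seq 'I_s.+1 -> Prop) : Prop :=
  qlogic_le md md' L /\ qlogic_le md' md L.

From Pilot Require Import Defs.
From mathcomp Require Import all_boot.
From mathcomp Require Import zify.

Set Implicit Arguments.
Unset Strict Implicit.
Unset Printing Implicit Defensive.

(* Both quantifiers range over the same 2^(n k) codes in the same order; they
   only read a code differently.  Bit j*k+m of a code is X_m(j) for Q^1, and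
   the same bit is X_q(r) for Q^star, where q*n+r = j*k+m with r < n.  Since k
   is fixed by the sentence, the relation [c*u + d = h*n + x] between elements
   u, x of the universe is first-order definable with + for all constants
   c, d, h <= k (iterate addition, propagating carries modulo n).  Replacing
   every atom X_m(a) by  \/_(q<k) exists r, a*k+m = q*n+r /\ X_q(r)  therefore
   turns a Q^1 sentence into an equivalent Q^star sentence, and symmetrically. *)

Definition term_below (b : nat) (u : term) : bool :=
  if u is TVar x then x < b else true.

Definition fresh_above (u : term) : nat := if u is TVar x then x.+1 else 0.

Definition bounded_env (n : nat) (V : nat -> nat) : Prop := forall z, V z < n.

Lemma term_below_fresh_above u : term_below (fresh_above u) u.
Proof. by case: u => //= x; exact: ltnSn. Qed.

Lemma term_below_S b : term_below b.+1 (TVar b).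
Proof. by rewrite /= ltnSn. Qed.

Lemma term_below_leq b b' u : term_below b u -> b <= b' -> term_below b' u.
Proof. by case: u => //= x; lia. Qed.

Lemma term_ok_cons bnd x u : term_ok bnd u -> term_ok (x :: bnd) u.
Proof. by case: u => //= y y_bnd; rewrite in_cons y_bnd orbT. Qed.

Lemma tval_upd n V b u x d :
  term_below b u -> b <= x -> Defs.tval n (upd V x d) u = Defs.tval n V u.
Proof. by case: u => //= y lt_yb le_bx; rewrite /upd; case: eqP => //; lia. Qed.
Arguments tval_upd {n V b u x d}.

Lemma upd_eq V x d : upd V x d x = d.
Proof. by rewrite /upd eqxx. Qed.

Lemma tval_upd_var n V x d : Defs.tval n (upd V x d) (TVar x) = d.
Proof. exact: upd_eq. Qed.

Lemma bounded_upd n V x d : bounded_env n V -> d < n -> bounded_env n (upd V x d).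
Proof. by move=> HV lt_dn y; rewrite /upd; case: eqP. Qed.

Definition code_pos (md : qmode) (n k m j : nat) : nat :=
  match md with Interleaved => j * k + m | Concatenated => m * n + j end.

Definition flip_qmode (md : qmode) : qmode :=
  match md with Interleaved => Concatenated | Concatenated => Interleaved end.

Lemma decode_pos md n k code m j :
  decode md n k code m j = [&& m < k, j < n & nth false code (code_pos md n k m j)].
Proof. by []. Qed.

Lemma code_pos_lt md n k m j : m < k -> j < n -> code_pos md n k m j < n * k.
Proof. by case: md => /=; nia. Qed.

Lemma code_pos_onto md n k p :
  p < n * k -> exists q r, [/\ q < k, r < n & code_pos md n k q r = p].
Proof.
move=> lt_p; have [n_gt0 k_gt0] : 0 < n /\ 0 < k by split; nia.
case: md => /=.
- exists (p %% k), (p %/ k); rewrite ltn_mod ltn_divLR // -divn_eq.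
  by split.
- exists (p %/ n), (p %% n); rewrite ltn_mod ltn_divLR // mulnC -divn_eq.
  by split.
Qed.

Lemma decode_reindex md md' n k code m j : m < k -> j < n ->
  decode md n k code m j =
  has (fun q => has (fun r => (code_pos md n k m j == code_pos md' n k q r)
                              && decode md' n k code q r) (iota 0 n)) (iota 0 k).
Proof.
move=> lt_mk lt_jn; rewrite decode_pos lt_mk lt_jn /=.
apply/idP/hasP => [bit_set | [q _ /hasP [r _ /andP [/eqP -> /and3P [_ _ //]]]]].
have [q [r [lt_qk lt_rn pos_qr]]] := code_pos_onto md' (code_pos_lt md lt_mk lt_jn).
exists q; first by rewrite mem_iota.
apply/hasP; exists r; first by rewrite mem_iota.
by rewrite decode_pos lt_qk lt_rn pos_qr eqxx.
Qed.

Section Formulas.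

Variable t : nat.

Definition ffalse : form t := FNot (FEq t TMin TMin).

Definition bigor (fs : seq (form t)) : form t := foldr (@FOr t) ffalse fs.

(* In the formulas below, [b] is the first variable free for use as a bound
   variable: all terms passed as arguments are below [b]. *)
Definition succ_form (y x : term) (b : nat) : form t :=
  FAnd (FLt t y x) (FAll b (FNot (FAnd (FLt t y (TVar b)) (FLt t (TVar b) x)))).

Definition wrap_succ_form (y x : term) : form t :=
  FAnd (FEq t y TMax) (FEq t x TMin).

(* [y + u = x + n]: with [z = max - y], this reads [(x + z) + 1 = u]. *)
Definition add_wrap_form (y u x : term) (b : nat) : form t :=
  FEx b (FEx b.+1 (FAnd (FPlus t (TVar b) y TMax)
    (FAnd (FPlus t x (TVar b) (TVar b.+1)) (succ_form (TVar b.+1) u b.+2)))).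

(* One addition step of a division by n with explicit carry: [TVar b] holds the
   remainder y of the previous partial sum, [P h'] says that this sum has
   quotient h', and [nowrap] / [wrap] relate y to the new remainder without /
   with a carry. *)
Definition carry_form (P : nat -> form t) (nowrap wrap : form t) (h b : nat) : form t :=
  FEx b (FOr (FAnd (P h) nowrap) (if h is h'.+1 then FAnd (P h') wrap else ffalse)).

Arguments carry_form : simpl never.

Fixpoint const_form (d h : nat) (x : term) (b : nat) : form t :=
  match d with
  | 0 => if h == 0 then FEq t x TMin else ffalse
  | d'.+1 => carry_form (fun h' => const_form d' h' (TVar b) b.+1)
               (succ_form (TVar b) x b.+1) (wrap_succ_form (TVar b) x) h b
  end.

Fixpoint lin_form (c d h : nat) (u x : term) (b : nat) : form t :=
  match c with
  | 0 => const_form d h x b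
  | c'.+1 => carry_form (fun h' => lin_form c' d h' u (TVar b) b.+1)
               (FPlus t (TVar b) u x) (add_wrap_form (TVar b) u x b.+1) h b
  end.

Definition pos_eq_form (md : qmode) (k m : nat) (a : term) (q : nat) (r : term)
    (b : nat) : form t :=
  match md with
  | Interleaved => lin_form k m q a r b
  | Concatenated => lin_form k q m r a b
  end.

(* Defines the atom X_m(a) of mode [md] from the atoms of mode [flip_qmode md];
   [a] is its only free variable, so bound variables above [a] are safe. *)
Definition atom_def (md : qmode) (k m : nat) (a : term) : form t :=
  let b := fresh_above a in
  if m < k then
    bigor [seq FEx b (FAnd (pos_eq_form md k m a q (TVar b) b.+1) (FSO t q (TVar b)))
          | q <- iota 0 k]
  else ffalse.

Fixpoint subst_atoms (G : nat -> term -> form t) (f : form t) : form t :=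
  match f with
  | FSO m a => G m a
  | FNot g => FNot (subst_atoms G g)
  | FAnd g h => FAnd (subst_atoms G g) (subst_atoms G h)
  | FOr g h => FOr (subst_atoms G g) (subst_atoms G h)
  | FEx x g => FEx x (subst_atoms G g)
  | FAll x g => FAll x (subst_atoms G g)
  | _ => f
  end.

Section Semantics.

Variable w : seq 'I_t.
Hypothesis w_gt0 : 0 < size w.
Local Notation n := (size w).
Local Notation tv := (Defs.tval (size w)).

Lemma tval_lt V u : bounded_env n V -> tv V u < n.
Proof. by case: u => //= *; lia. Qed.

Lemma eval_exP V S x f :
  reflect (exists2 d, d < n & eval w (upd V x d) S f) (eval w V S (FEx x f)).
Proof.
apply: (iffP hasP) => [[d]|[d lt_dn]]; last by exists d; rewrite ?mem_iota.
by rewrite mem_iota; exists d.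
Qed.

Lemma eval_allP V S x f :
  reflect (forall d, d < n -> eval w (upd V x d) S f) (eval w V S (FAll x f)).
Proof.
apply: (iffP allP) => H d lt_dn; first by apply: H; rewrite mem_iota.
by apply: H; move: lt_dn; rewrite mem_iota.
Qed.

Lemma eval_and V S f g : eval w V S (FAnd f g) = eval w V S f && eval w V S g.
Proof. by []. Qed.

Lemma eval_bigor V S fs : eval w V S (bigor fs) = has (eval w V S) fs.
Proof. by elim: fs => //= f fs <-. Qed.

Lemma eval_succ_form V S y x b :
  bounded_env n V -> term_below b y -> term_below b x ->
  eval w V S (succ_form y x b) = (tv V x == (tv V y).+1).
Proof.
move=> HV y_b x_b; rewrite /succ_form eval_and.
have := tval_lt y HV; have := tval_lt x HV.
set X := tv V x; set Y := tv V y => lt_Xn lt_Yn.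
apply/andP/eqP => [[lt_YX /eval_allP no_between]|X_eq].
- move: lt_YX; have := no_between Y.+1.
  by rewrite /= !(tval_upd y_b, tval_upd x_b) // upd_eq -/X -/Y; lia.
- split; first by rewrite /= -/X -/Y X_eq.
  apply/eval_allP => d _.
  by rewrite /= !(tval_upd y_b, tval_upd x_b) // upd_eq -/X -/Y; lia.
Qed.

Lemma eval_wrap_succ_form V S y x :
  bounded_env n V -> eval w V S (wrap_succ_form y x) = ((tv V y).+1 == tv V x + n).
Proof.
by move=> HV; have := tval_lt y HV; have := tval_lt x HV => /=; lia.
Qed.

Lemma eval_add_wrap_form V S y u x b :
  bounded_env n V -> term_below b y -> term_below b u -> term_below b x ->
  eval w V S (add_wrap_form y u x b) = (tv V y + tv V u == tv V x + n).
Proof.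
move=> HV y_b u_b x_b.
have := tval_lt y HV; have := tval_lt u HV; have := tval_lt x HV.
set X := tv V x; set Y := tv V y; set U := tv V u => lt_Xn lt_Un lt_Yn.
have u_b2 : term_below b.+2 u by apply: (term_below_leq u_b); lia.
have body_eq z e : z < n -> e < n ->
  eval w (upd (upd V b z) b.+1 e) S
    (FAnd (FPlus t (TVar b) y TMax)
      (FAnd (FPlus t x (TVar b) (TVar b.+1)) (succ_form (TVar b.+1) u b.+2)))
  = [&& z + Y == n.-1, X + z == e & U == e.+1].
  move=> lt_zn lt_en; set W := upd (upd V b z) b.+1 e.
  have W_b : W b = z by rewrite /W /upd /= ltn_eqF // eqxx.
  have W_b1 : W b.+1 = e by rewrite /W /upd /= eqxx.
  have W_bounded : bounded_env n W by do 2?apply: bounded_upd.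
  rewrite 2!eval_and eval_succ_form //= W_b W_b1.
  by rewrite !(tval_upd y_b, tval_upd u_b, tval_upd x_b).
apply/eval_exP/eqP => [[z lt_zn /eval_exP [e lt_en]]|E].
- by rewrite body_eq //; lia.
- exists (n.-1 - Y); first lia.
  by apply/eval_exP; exists (X + (n.-1 - Y)); rewrite ?body_eq; lia.
Qed.

Lemma eval_carry_form P nowrap wrap h b V S A delta X :
  X < n -> delta <= n ->
  (forall y h', y < n -> eval w (upd V b y) S (P h') = (A == h' * n + y)) ->
  (forall y, y < n -> eval w (upd V b y) S nowrap = (y + delta == X)) ->
  (forall y, y < n -> eval w (upd V b y) S wrap = (y + delta == X + n)) ->
  eval w V S (carry_form P nowrap wrap h b) = (A + delta == h * n + X).
Proof.
move=> lt_Xn le_delta_n HP Hnowrap Hwrap.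
apply/eval_exP/eqP => [[y lt_yn]|E].
- by case: h => [|h]; rewrite /= !HP ?Hnowrap ?Hwrap //; lia.
- have [le_delta_X | lt_X_delta] := leqP delta X.
  + by exists (X - delta); rewrite /= ?HP ?Hnowrap; lia.
  + case: h E => [|h] E; first lia.
    by exists (X + n - delta); rewrite /= ?HP ?Hwrap; lia.
Qed.

Lemma eval_const_form d h x b V S :
  bounded_env n V -> term_below b x ->
  eval w V S (const_form d h x b) = (d == h * n + tv V x).
Proof.
elim: d h x b V => [|d IH] h x b V HV x_b.
- case: h => [|h] /=; first by rewrite eq_sym.
  by apply/esym/eqP; rewrite mulSn; lia.
- have x_b1 : term_below b.+1 x by apply: (term_below_leq x_b); lia.
  rewrite [const_form _ _ _ _]/= -[d.+1]addn1.
  apply: eval_carry_form => [||y h' /(bounded_upd b HV) HVy|y /(bounded_upd b HV) HVy|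
    y /(bounded_upd b HV) HVy].
  + exact: tval_lt.
  + exact: w_gt0.
  + by rewrite IH ?term_below_S // tval_upd_var.
  + rewrite eval_succ_form ?term_below_S //.
    by rewrite tval_upd_var (tval_upd x_b) // addn1 eq_sym.
  + by rewrite eval_wrap_succ_form // tval_upd_var (tval_upd x_b) // addn1.
Qed.

Lemma eval_lin_form c d h u x b V S :
  bounded_env n V -> term_below b u -> term_below b x ->
  eval w V S (lin_form c d h u x b) = (c * tv V u + d == h * n + tv V x).
Proof.
elim: c h x b V => [|c IH] h x b V HV u_b x_b; first exact: eval_const_form.
have u_b1 : term_below b.+1 u by apply: (term_below_leq u_b); lia.
have x_b1 : term_below b.+1 x by apply: (term_below_leq x_b); lia.
rewrite (_ : c.+1 * _ + d = c * tv V u + d + tv V u); last by rewrite mulSn; lia.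
rewrite [lin_form _ _ _ _ _ _]/=.
apply: eval_carry_form => [||y h' /(bounded_upd b HV) HVy|y _|y /(bounded_upd b HV) HVy].
- exact: tval_lt.
- exact/ltnW/tval_lt.
- by rewrite IH ?term_below_S // tval_upd_var (tval_upd u_b).
- by rewrite /= upd_eq !(tval_upd u_b, tval_upd x_b).
- rewrite eval_add_wrap_form ?term_below_S //.
  by rewrite tval_upd_var !(tval_upd u_b, tval_upd x_b).
Qed.

Lemma eval_pos_eq_form md k m a q r b V S :
  bounded_env n V -> term_below b a -> term_below b r ->
  eval w V S (pos_eq_form md k m a q r b)
  = (code_pos md n k m (tv V a) == code_pos (flip_qmode md) n k q (tv V r)).
Proof.
move=> HV a_b r_b; case: md => /=; rewrite eval_lin_form //.
- by rewrite [k * _]mulnC.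
- by rewrite eq_sym [k * _]mulnC.
Qed.

Lemma eval_atom_def md k code m a V :
  bounded_env n V ->
  eval w V (decode (flip_qmode md) n k code) (atom_def md k m a)
  = decode md n k code m (tv V a).
Proof.
move=> HV; rewrite /atom_def; set b := fresh_above a.
have [lt_mk|le_km] := ltnP m k; last by rewrite decode_pos ltnNge le_km.
rewrite (decode_reindex _ (flip_qmode md)) ?tval_lt // eval_bigor has_map.
apply: eq_in_has => q _ /=; apply: eq_in_has => r; rewrite mem_iota /= => lt_rn.
have a_b1 : term_below b.+1 a by apply: (term_below_leq (term_below_fresh_above a)); lia.
rewrite eval_pos_eq_form ?term_below_S //; last exact: bounded_upd.
by rewrite tval_upd_var upd_eq (tval_upd (term_below_fresh_above a)).
Qed.

Lemma eval_subst_atoms S S' G :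
  (forall V, bounded_env n V -> forall m a, eval w V S' (G m a) = S m (tv V a)) ->
  forall f V, bounded_env n V -> eval w V S' (subst_atoms G f) = eval w V S f.
Proof.
move=> HG; elim=> //= [m a V /HG -> //|g IH V /IH -> //|g IHg h IHh V HV|
  g IHg h IHh V HV|x g IH V HV|x g IH V HV]; try by rewrite IHg ?IHh.
- by apply: eq_in_has => d; rewrite mem_iota => /andP [_ ?]; apply/IH/bounded_upd.
- by apply: eq_in_all => d; rewrite mem_iota => /andP [_ ?]; apply/IH/bounded_upd.
Qed.

End Semantics.

Lemma fo_closed_bigor bnd fs : all (fo_closed bnd) fs -> fo_closed bnd (bigor fs).
Proof. by elim: fs => //= f fs IH /andP [-> /IH]. Qed.

Lemma so_bound_bigor k fs : all (so_bound k) fs -> so_bound k (bigor fs).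
Proof. by elim: fs => //= f fs IH /andP [-> /IH]. Qed.

Lemma fo_closed_succ_form bnd y x b :
  term_ok bnd y -> term_ok bnd x -> fo_closed bnd (succ_form y x b).
Proof. by move=> y_ok x_ok; rewrite /= y_ok x_ok /= in_cons eqxx !term_ok_cons. Qed.

Lemma fo_closed_add_wrap_form bnd y u x b :
  term_ok bnd y -> term_ok bnd u -> term_ok bnd x -> fo_closed bnd (add_wrap_form y u x b).
Proof.
by move=> y_ok u_ok x_ok; rewrite /= !in_cons !eqxx /= !orbT !term_ok_cons.
Qed.

Lemma fo_closed_carry_form bnd P nowrap wrap h b :
  (forall h', fo_closed (b :: bnd) (P h')) -> fo_closed (b :: bnd) nowrap ->
  fo_closed (b :: bnd) wrap -> fo_closed bnd (carry_form P nowrap wrap h b).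
Proof.
by move=> HP nowrap_ok wrap_ok; case: h => [|h]; rewrite /carry_form /= !HP nowrap_ok ?wrap_ok.
Qed.

Lemma fo_closed_const_form bnd d h x b : term_ok bnd x -> fo_closed bnd (const_form d h x b).
Proof.
elim: d h x b bnd => [|d IH] h x b bnd x_ok; first by rewrite /=; case: eqP; rewrite /= ?x_ok.
rewrite [const_form _ _ _ _]/=.
have b_ok : term_ok (b :: bnd) (TVar b) by rewrite /= in_cons eqxx.
apply: fo_closed_carry_form => [h'||]; first exact: IH.
- by apply: fo_closed_succ_form => //; rewrite term_ok_cons.
- by rewrite /= in_cons eqxx term_ok_cons.
Qed.

Lemma fo_closed_lin_form bnd c d h u x b :
  term_ok bnd u -> term_ok bnd x -> fo_closed bnd (lin_form c d h u x b).
Proof.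
elim: c h x b bnd => [|c IH] h x b bnd u_ok x_ok; first exact: fo_closed_const_form.
rewrite [lin_form _ _ _ _ _ _]/=.
have b_ok : term_ok (b :: bnd) (TVar b) by rewrite /= in_cons eqxx.
apply: fo_closed_carry_form => [h'||]; first by apply: IH => //; rewrite term_ok_cons.
- by rewrite /= in_cons eqxx !term_ok_cons.
- by apply: fo_closed_add_wrap_form => //; rewrite term_ok_cons.
Qed.

Lemma so_bound_lin_form k c d h u x b : so_bound k (lin_form c d h u x b).
Proof.
elim: c h x b => [|c IH] h x b; last by case: h => [|h] /=; rewrite !IH.
by elim: d h x b => [|d IHd] [|h] x b //=; rewrite !IHd.
Qed.

Lemma fo_closed_atom_def bnd md k m a : term_ok bnd a -> fo_closed bnd (atom_def md k m a).
Proof.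
move=> a_ok; rewrite /atom_def; case: (m < k) => //.
apply: fo_closed_bigor; rewrite all_map; apply/allP => q _ /=.
rewrite in_cons eqxx andbT; case: md => /=;
  by apply: fo_closed_lin_form; rewrite /= ?in_cons ?eqxx ?term_ok_cons.
Qed.

Lemma so_bound_atom_def md k m a : so_bound k (atom_def md k m a).
Proof.
rewrite /atom_def; case: (m < k) => //.
apply: so_bound_bigor; rewrite all_map; apply/allP => q; rewrite mem_iota /= => lt_qk.
by case: md; rewrite /= so_bound_lin_form.
Qed.

Lemma fo_closed_subst_atoms G :
  (forall bnd m a, term_ok bnd a -> fo_closed bnd (G m a)) ->
  forall f bnd, fo_closed bnd f -> fo_closed bnd (subst_atoms G f).
Proof.
move=> HG; elim=> //= [m a bnd /HG //|g IHg h IHh bnd|g IHg h IHh bnd|x g IH bnd|x g IH bnd];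
  by [case/andP => /IHg -> /IHh | exact: IH].
Qed.

Lemma so_bound_subst_atoms k G :
  (forall m a, so_bound k (G m a)) -> forall f, so_bound k (subst_atoms G f).
Proof. by move=> HG; elim=> //= g -> h ->. Qed.

End Formulas.

Lemma qlogic_le_of_atom_defs md md' s (L : seq 'I_s.+1 -> Prop)
    (G : forall t, nat -> nat -> term -> form t) :
  (forall t k bnd m a, term_ok bnd a -> fo_closed bnd (G t k m a)) ->
  (forall t k m a, so_bound k (G t k m a)) ->
  (forall t (w : seq 'I_t) k code V m a, 0 < size w -> bounded_env (size w) V ->
     eval w V (decode md' (size w) k code) (G t k m a)
     = decode md (size w) k code m (Defs.tval (size w) V a)) ->
  qlogic_le md md' L.
Proof.
move=> G_fo G_so G_sem t q q_wf.
pose q' := QSent (qk q) (map_tuple (subst_atoms (G t (qk q))) (qphis q)).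
exists q'; split.
- rewrite /qsent_wf /= all_map; apply: sub_all q_wf => phi /andP [phi_fo phi_so] /=.
  by rewrite (fo_closed_subst_atoms (G_fo t (qk q))) ?so_bound_subst_atoms.
- move=> w w_gt0; rewrite /qsat (_ : qword md' w q' = qword md w q) //.
  apply: eq_map => i /=; rewrite -map_comp; congr (inord (find id _)).
  apply: eq_map => phi /=; apply: eval_subst_atoms => [V HV m a|z]; [exact: G_sem | exact: w_gt0].
Qed.

Lemma qlogic_le_flip md s (L : seq 'I_s.+1 -> Prop) : qlogic_le md (flip_qmode md) L.
Proof.
apply: (@qlogic_le_of_atom_defs _ _ _ L (fun t => atom_def t md)).
- by move=> t k bnd m a; apply: fo_closed_atom_def.
- by move=> t k m a; apply: so_bound_atom_def.
- by move=> t w k code V m a w_gt0 HV; apply: eval_atom_def.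
Qed.

Theorem proposition2p7 (s : nat) (L : seq 'I_s.+1 -> Prop) :
  qlogic_equiv Interleaved Concatenated L.
Proof. by split; apply: qlogic_le_flip. Qed.
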